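(* For every integer $n\geq1$, $\mathrm{C}_{\sharp=n}\leq_W\mathrm{C}_\mathbb{N}$.
   Context: Represented spaces carry partial surjections $\delta:\subseteq\mathbb{N}^\mathbb{N}\to X$; a realizer $F$ of $f$ satisfies $\delta_YF(p)\in f(\delta_X(p))$ for $p\in\operatorname{dom}(f\delta_X)$. $f\leq_W g$ iff there are computable partial $K,H$ on Baire space such that $p\mapsto K\langle p,G(H(p))\rangle$ realizes $f$ for every realizer $G$ of $g$. $\mathrm{C}_\mathbb{N}$ is closed choice on $\mathbb{N}$: given a non-empty $A\subseteq\mathbb{N}$ via an enumeration of $\mathbb{N}\setminus A$, output an element of $A$. Closed subsets of Cantor space are named by binary trees (set of infinite paths); $\mathrm{C}_{\sharp=n}$ is the restriction of $\mathrm{C}_{\{0,1\}^\mathbb{N}}$ (output any point of the closed set) to trees having exactly $n$ vertices at each level $k$ with $2^k\geq n$ and in which, from some finite depth on, every vertex has exactly one child. *)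

From Stdlib Require Import Arith List.
Import ListNotations.

Definition baire := nat -> nat.

Inductive rterm : Type :=
| RZero
| RSucc
| RProj (i : nat)
| RComp (f : rterm) (gs : list rterm)
| RPrim (f g : rterm)
| RMu (f : rterm)
| ROracle.

Inductive eval (p : baire) : rterm -> list nat -> nat -> Prop :=
| e_zero args : eval p RZero args 0
| e_succ x args : eval p RSucc (x :: args) (S x)
| e_proj i args v : nth_error args i = Some v -> eval p (RProj i) args v
| e_comp f gs args vs v :
    evall p gs args vs -> eval p f vs v -> eval p (RComp f gs) args v
| e_prim0 f g args v : eval p f args v -> eval p (RPrim f g) (0 :: args) v
| e_primS f g y args r v :
    eval p (RPrim f g) (y :: args) r -> eval p g (y :: r :: args) v ->
    eval p (RPrim f g) (S y :: args) v
| e_mu f args n :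
    eval p f (n :: args) 0 ->
    (forall m, m < n -> exists v, eval p f (m :: args) (S v)) ->
    eval p (RMu f) args n
| e_oracle x args : eval p ROracle (x :: args) (p x)
with evall (p : baire) : list rterm -> list nat -> list nat -> Prop :=
| el_nil args : evall p [] args []
| el_cons g gs args v vs :
    eval p g args v -> evall p gs args vs -> evall p (g :: gs) args (v :: vs).

(* The computable partial function Phi_t : Baire -> Baire given by t:
   Phi_t(p) = q  iff  for every k, t with oracle p on input k halts with q k.
   (Its domain is the set of p on which t halts on every input.) *)
Definition computes (t : rterm) (p q : baire) : Prop :=
  forall k, eval p t [k] (q k).

Definition bpair (p q : baire) : baire :=
  fun i => if Nat.even i then p (Nat.div2 i) else q (Nat.div2 i).

Record pfun := { pdom : baire -> Prop; pval : baire -> baire }.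

Record rep_space := { carrier : Type; delta : baire -> carrier -> Prop }.

Definition problem (X Y : rep_space) := carrier X -> carrier Y -> Prop.
Definition pdomain {X Y : rep_space} (f : problem X Y) (x : carrier X) : Prop :=
  exists y, f x y.

Definition realizes {X Y : rep_space} (f : problem X Y) (F : pfun) : Prop :=
  forall p x, delta X p x -> pdomain f x ->
    pdom F p /\ exists y, delta Y (pval F p) y /\ f x y.

(* Weihrauch reducibility f <=_W g: computable partial K, H such that
   p |-> K<p, G(H(p))> realizes f for every realizer G of g. *)
Definition Wle {X Y X' Y' : rep_space} (f : problem X Y) (g : problem X' Y') : Prop :=
  exists tH tK : rterm,
    forall G : pfun, realizes g G ->
      forall p x, delta X p x -> pdomain f x ->
        exists h, computes tH p h /\ pdom G h /\
          exists r, computes tK (bpair p (pval G h)) r /\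
            exists y, delta Y r y /\ f x y.

Definition nat_rep : rep_space := {| carrier := nat; delta := fun p n => p 0 = n |}.

(* closed subsets of N, named by an enumeration of the complement:
   p names A iff N \ A = { n | exists i, p i = n+1 } (0 = "no information") *)
Definition closedN_rep : rep_space :=
  {| carrier := nat -> Prop;
     delta := fun p A => forall n, A n <-> ~ (exists i, p i = S n) |}.

Definition C_N : problem closedN_rep nat_rep := fun A n => A n.

Definition cantor_rep : rep_space :=
  {| carrier := nat -> bool;
     delta := fun p x => forall i, p i = (if x i then 1 else 0) |}.

(* finite binary words, coded bijectively by natural numbers *)
Fixpoint wcode (w : list bool) : nat :=
  match w with
  | [] => 0
  | b :: w' => S (2 * wcode w' + (if b then 1 else 0))
  end.

Definition is_tree (T : list bool -> Prop) : Prop :=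
  forall w b, T (w ++ [b]) -> T w.

Definition tree_rep : rep_space :=
  {| carrier := list bool -> Prop;
     delta := fun p T => is_tree T /\ forall w, T w <-> p (wcode w) <> 0 |}.

Definition prefix (x : nat -> bool) (k : nat) : list bool := map x (seq 0 k).

Definition is_path (T : list bool -> Prop) (x : nat -> bool) : Prop :=
  forall k, T (prefix x k).

Definition level_card (T : list bool -> Prop) (k m : nat) : Prop :=
  exists l : list (list bool), NoDup l /\ length l = m /\
    forall w, (length w = k /\ T w) <-> In w l.

Definition sharp_tree (n : nat) (T : list bool -> Prop) : Prop :=
  (forall k, n <= 2 ^ k -> level_card T k n) /\
  (exists d, forall w, T w -> d <= length w ->
     (T (w ++ [true]) <-> ~ T (w ++ [false]))).

Definition C_sharp (n : nat) : problem tree_rep cantor_rep :=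
  fun T x => sharp_tree n T /\ is_path T x.

(* Let p name a tree T admitted by C_{#=n}, and let A be the set of g such that every
   vertex of T whose code is at least g has a child.  A is closed: a childless vertex with
   code u >= g, which can be detected from p, witnesses g outside A.  A is nonempty, since
   from depth d on every vertex has a child.  Given g in A, take the least vertex c of T
   with code at least g (T has n >= 1 vertices on every deep level) and descend from c,
   choosing the left child whenever it exists and the right child otherwise.  Codes only
   grow along the descent, so every vertex reached has a child; together with the path
   from the root to c this is an infinite path of T. *)

From Stdlib Require Import Arith List Lia Wf_nat.
Import ListNotations.

(** * Oracle programs computing total functions *)

Definition implements (n : nat) (t : rterm) (F : baire -> list nat -> nat) : Prop :=
  forall p a, n <= length a -> eval p t a (F p a).

Lemma implements_ext n t F F' : implements n t F ->
  (forall p a, n <= length a -> F p a = F' p a) -> implements n t F'.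
Proof. intros Ht E p a L. rewrite <- E by exact L. apply Ht, L. Qed.

Lemma implements_proj n i : i < n -> implements n (RProj i) (fun _ a => nth i a 0).
Proof. intros Hi p a L. constructor. apply nth_error_nth'. lia. Qed.

Lemma implements_comp1 n f F t1 F1 : implements 1 f F -> implements n t1 F1 ->
  implements n (RComp f [t1]) (fun p a => F p [F1 p a]).
Proof.
  intros Hf H1 p a L. apply e_comp with (vs := [F1 p a]).
  - repeat constructor; auto.
  - apply Hf; simpl; lia.
Qed.

Lemma implements_comp2 n f F t1 F1 t2 F2 :
  implements 2 f F -> implements n t1 F1 -> implements n t2 F2 ->
  implements n (RComp f [t1; t2]) (fun p a => F p [F1 p a; F2 p a]).
Proof.
  intros Hf H1 H2 p a L. apply e_comp with (vs := [F1 p a; F2 p a]).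
  - repeat constructor; auto.
  - apply Hf; simpl; lia.
Qed.

Lemma implements_comp3 n f F t1 F1 t2 F2 t3 F3 :
  implements 3 f F -> implements n t1 F1 -> implements n t2 F2 -> implements n t3 F3 ->
  implements n (RComp f [t1; t2; t3]) (fun p a => F p [F1 p a; F2 p a; F3 p a]).
Proof.
  intros Hf H1 H2 H3 p a L. apply e_comp with (vs := [F1 p a; F2 p a; F3 p a]).
  - repeat constructor; auto.
  - apply Hf; simpl; lia.
Qed.

Lemma implements_prim n f g F G R :
  implements n f F -> implements (S (S n)) g G ->
  (forall p a, R p (0 :: a) = F p a) ->
  (forall p y a, R p (S y :: a) = G p (y :: R p (y :: a) :: a)) ->
  implements (S n) (RPrim f g) R.
Proof.
  intros Hf Hg R0 RS p [|y a] L; simpl in L; [lia|].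
  induction y as [|y IH].
  - rewrite R0. constructor. apply Hf. lia.
  - rewrite RS. econstructor; [exact IH|]. apply Hg. simpl. lia.
Qed.

Lemma eval_mu n f F p a m : implements (S n) f F -> n <= length a ->
  F p (m :: a) = 0 -> (forall k, k < m -> F p (k :: a) <> 0) -> eval p (RMu f) a m.
Proof.
  intros Hf L Hm Hlt. constructor.
  - rewrite <- Hm. apply Hf. simpl. lia.
  - intros k Hk. destruct (F p (k :: a)) as [|v] eqn:E; [now destruct (Hlt k Hk)|].
    exists v. rewrite <- E. apply Hf. simpl. lia.
Qed.

Lemma implements_mu n f F M : implements (S n) f F ->
  (forall p a, F p (M p a :: a) = 0 /\ forall k, k < M p a -> F p (k :: a) <> 0) ->
  implements n (RMu f) M.
Proof. intros Hf HM p a L. destruct (HM p a). eapply eval_mu; eauto. Qed.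

Definition rsucc (t : rterm) : rterm := RComp RSucc [t].

Lemma implements_rsucc n t F : implements n t F -> implements n (rsucc t) (fun p a => S (F p a)).
Proof.
  intros H. apply (implements_comp1 _ _ (fun _ a => S (nth 0 a 0))); [|exact H].
  intros p [|x a] L; [simpl in L; lia|]. constructor.
Qed.

Definition roracle (t : rterm) : rterm := RComp ROracle [t].

Lemma implements_roracle n t F : implements n t F ->
  implements n (roracle t) (fun p a => p (F p a)).
Proof.
  intros H. apply (implements_comp1 _ _ (fun p a => p (nth 0 a 0))); [|exact H].
  intros p [|x a] L; [simpl in L; lia|]. constructor.
Qed.

Fixpoint rconst (k : nat) : rterm :=
  match k with 0 => RZero | S k => rsucc (rconst k) end.

Lemma implements_rconst n k : implements n (rconst k) (fun _ _ => k).
Proof.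
  induction k as [|k IH]; [constructor|]. exact (implements_rsucc _ _ _ IH).
Qed.

Definition radd (t1 t2 : rterm) : rterm := RComp (RPrim (RProj 0) (rsucc (RProj 1))) [t1; t2].

Lemma implements_radd n t1 F1 t2 F2 : implements n t1 F1 -> implements n t2 F2 ->
  implements n (radd t1 t2) (fun p a => F1 p a + F2 p a).
Proof.
  intros H1 H2. apply (implements_comp2 _ _ (fun _ a => nth 0 a 0 + nth 1 a 0)); auto.
  apply implements_prim with (F := fun _ a => nth 0 a 0) (G := fun _ a => S (nth 1 a 0)).
  all: try reflexivity.
  - apply implements_proj. lia.
  - apply implements_rsucc, implements_proj. lia.
Qed.

Definition rmul (t1 t2 : rterm) : rterm := RComp (RPrim RZero (radd (RProj 1) (RProj 2))) [t1; t2].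

Lemma implements_rmul n t1 F1 t2 F2 : implements n t1 F1 -> implements n t2 F2 ->
  implements n (rmul t1 t2) (fun p a => F1 p a * F2 p a).
Proof.
  intros H1 H2. apply (implements_comp2 _ _ (fun _ a => nth 0 a 0 * nth 1 a 0)); auto.
  apply implements_prim with (F := fun _ _ => 0) (G := fun _ a => nth 1 a 0 + nth 2 a 0).
  - constructor.
  - apply implements_radd; apply implements_proj; lia.
  - reflexivity.
  - intros p y a. simpl. lia.
Qed.

Definition rsub (t1 t2 : rterm) : rterm :=
  RComp (RPrim (RProj 0) (RComp (RPrim RZero (RProj 0)) [RProj 1])) [t2; t1].

Lemma implements_rsub n t1 F1 t2 F2 : implements n t1 F1 -> implements n t2 F2 ->
  implements n (rsub t1 t2) (fun p a => F1 p a - F2 p a).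
Proof.
  intros H1 H2. apply (implements_comp2 _ _ (fun _ a => nth 1 a 0 - nth 0 a 0)); auto.
  apply implements_prim with (F := fun _ a => nth 0 a 0) (G := fun _ a => pred (nth 1 a 0)).
  - apply implements_proj. lia.
  - apply (implements_comp1 _ _ (fun _ a => pred (nth 0 a 0))); [|apply implements_proj; lia].
    apply implements_prim with (F := fun _ _ => 0) (G := fun _ a => nth 0 a 0).
    + constructor.
    + apply implements_proj. lia.
    + reflexivity.
    + reflexivity.
  - intros p a. simpl. lia.
  - intros p y a. simpl. lia.
Qed.

Definition rifz (t0 t1 t2 : rterm) : rterm := RComp (RPrim (RProj 0) (RProj 3)) [t0; t1; t2].

Lemma implements_rifz n t0 F0 t1 F1 t2 F2 :
  implements n t0 F0 -> implements n t1 F1 -> implements n t2 F2 ->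
  implements n (rifz t0 t1 t2) (fun p a => if F0 p a =? 0 then F1 p a else F2 p a).
Proof.
  intros H0 H1 H2.
  apply (implements_comp3 _ _ (fun _ a => if nth 0 a 0 =? 0 then nth 1 a 0 else nth 2 a 0)); auto.
  apply implements_prim with (F := fun _ a => nth 0 a 0) (G := fun _ a => nth 3 a 0).
  all: try reflexivity; apply implements_proj; lia.
Qed.

Definition rpow2 (t : rterm) : rterm := RComp (RPrim (rconst 1) (radd (RProj 1) (RProj 1))) [t].

Lemma implements_rpow2 n t F : implements n t F -> implements n (rpow2 t) (fun p a => 2 ^ F p a).
Proof.
  intros H. apply (implements_comp1 _ _ (fun _ a => 2 ^ nth 0 a 0)); [|exact H].
  apply implements_prim with (F := fun _ _ => 1) (G := fun _ a => nth 1 a 0 + nth 1 a 0).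
  - apply implements_rconst.
  - apply implements_radd; apply implements_proj; lia.
  - reflexivity.
  - intros p y a. simpl. lia.
Qed.

Definition rodd (t : rterm) : rterm := RComp (RPrim RZero (rsub (rconst 1) (RProj 1))) [t].

Lemma implements_rodd n t F : implements n t F ->
  implements n (rodd t) (fun p a => Nat.b2n (Nat.odd (F p a))).
Proof.
  intros H. apply (implements_comp1 _ _ (fun _ a => Nat.b2n (Nat.odd (nth 0 a 0)))); [|exact H].
  apply implements_prim with (F := fun _ _ => 0) (G := fun _ a => 1 - nth 1 a 0).
  - constructor.
  - apply implements_rsub; [apply implements_rconst|apply implements_proj; lia].
  - reflexivity.
  - intros p y a. simpl. rewrite Nat.odd_succ, <- Nat.negb_odd. now destruct (Nat.odd y).
Qed.

Lemma div2_succ n : Nat.div2 (S n) = Nat.div2 n + Nat.b2n (Nat.odd n).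
Proof.
  pose proof (Nat.div2_odd n) as En. pose proof (Nat.div2_odd (S n)) as ESn.
  rewrite Nat.odd_succ, <- Nat.negb_odd in ESn. destruct (Nat.odd n); simpl in *; lia.
Qed.

Definition rdiv2 (t : rterm) : rterm := RComp (RPrim RZero (radd (RProj 1) (rodd (RProj 0)))) [t].

Lemma implements_rdiv2 n t F : implements n t F ->
  implements n (rdiv2 t) (fun p a => Nat.div2 (F p a)).
Proof.
  intros H. apply (implements_comp1 _ _ (fun _ a => Nat.div2 (nth 0 a 0))); [|exact H].
  apply implements_prim
    with (F := fun _ _ => 0) (G := fun _ a => nth 1 a 0 + Nat.b2n (Nat.odd (nth 0 a 0))).
  - constructor.
  - apply implements_radd; [|apply implements_rodd]; apply implements_proj; lia.
  - reflexivity.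
  - intros p y a. apply div2_succ.
Qed.

Definition rtestbit (ta tk : rterm) : rterm :=
  rodd (RComp (RPrim (RProj 0) (rdiv2 (RProj 1))) [tk; ta]).

Lemma implements_rtestbit n ta A tk K : implements n ta A -> implements n tk K ->
  implements n (rtestbit ta tk) (fun p a => Nat.b2n (Nat.testbit (A p a) (K p a))).
Proof.
  intros HA HK.
  apply implements_ext with (F := fun p a => Nat.b2n (Nat.odd (Nat.shiftr (A p a) (K p a)))).
  - apply implements_rodd.
    apply (implements_comp2 _ _ (fun _ a => Nat.shiftr (nth 1 a 0) (nth 0 a 0))); auto.
    apply implements_prim
      with (F := fun _ a => nth 0 a 0) (G := fun _ a => Nat.div2 (nth 1 a 0)).
    all: try reflexivity.
    + apply implements_proj. lia.
    + apply implements_rdiv2, implements_proj. lia.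
  - intros p a _. now rewrite Nat.testbit_odd.
Qed.

Definition rlog2 (t : rterm) : rterm :=
  RComp (RMu (rsub (rsucc (RProj 1)) (rpow2 (rsucc (RProj 0))))) [t].

Lemma implements_rlog2 n t F : implements n t F ->
  implements n (rlog2 t) (fun p a => Nat.log2 (F p a)).
Proof.
  intros H. apply (implements_comp1 _ _ (fun _ a => Nat.log2 (nth 0 a 0))); [|exact H].
  apply implements_mu with (F := fun _ a => S (nth 1 a 0) - 2 ^ S (nth 0 a 0)).
  - apply implements_rsub; [|apply implements_rpow2]; apply implements_rsucc, implements_proj; lia.
  - intros _ a. simpl nth. set (x := nth 0 a 0).
    destruct x as [|x].
    + split; [reflexivity|intros k Hk; inversion Hk].
    + destruct (Nat.log2_spec (S x)) as [Lo Hi]; [lia|]. split; [lia|].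
      intros k Hk. assert (2 ^ S k <= 2 ^ Nat.log2 (S x)) by (apply Nat.pow_le_mono_r; lia). lia.
Qed.

(** * Codes of binary words *)

Definition child_code (u : nat) (b : bool) : nat := u + S (Nat.b2n b) * 2 ^ Nat.log2 (S u).

(* [S (wcode w)] is the binary numeral with digits [w], least significant first,
   followed by a leading 1. *)
Lemma S_wcode_cons b w : S (wcode (b :: w)) = 2 * S (wcode w) + Nat.b2n b.
Proof. destruct b; simpl; lia. Qed.

Lemma wcode_bounds w : 2 ^ length w <= S (wcode w) < 2 ^ S (length w).
Proof.
  induction w as [|b w IH]; [simpl; lia|].
  rewrite S_wcode_cons. destruct b; simpl in *; lia.
Qed.

Lemma log2_S_wcode w : Nat.log2 (S (wcode w)) = length w.
Proof. apply Nat.log2_unique; [lia|apply wcode_bounds]. Qed.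

Lemma wcode_snoc w b : wcode (w ++ [b]) = child_code (wcode w) b.
Proof.
  unfold child_code. rewrite log2_S_wcode.
  induction w as [|b' w IH]; [destruct b; reflexivity|].
  simpl length. rewrite Nat.pow_succ_r'. simpl app. simpl wcode. rewrite IH.
  destruct b, b'; simpl; lia.
Qed.

Lemma testbit_S_wcode w k : k < length w -> Nat.testbit (S (wcode w)) k = nth k w false.
Proof.
  revert k. induction w as [|b w IH]; intros k Hk; simpl in Hk; [lia|].
  rewrite S_wcode_cons. destruct k as [|k], b; simpl Nat.b2n; rewrite ?Nat.add_0_r.
  - apply Nat.testbit_odd_0.
  - apply Nat.testbit_even_0.
  - rewrite Nat.testbit_odd_succ by lia. apply IH. lia.
  - rewrite Nat.testbit_even_succ by lia. apply IH. lia.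
Qed.

Lemma wcode_surj c : exists w, wcode w = c.
Proof.
  induction c as [c IH] using (well_founded_induction lt_wf).
  destruct c as [|m]; [now exists []|].
  pose proof (Nat.div2_odd m) as Em.
  destruct (IH (Nat.div2 m)) as [w Hw]; [lia|].
  exists (Nat.odd m :: w). apply Nat.succ_inj. rewrite S_wcode_cons, Hw. lia.
Qed.

(** * Vertices with children and the descent *)

Lemma tree_prefix_closed (T : list bool -> Prop) u v : is_tree T -> T (u ++ v) -> T u.
Proof.
  intros HT. induction v as [|b v IH] using rev_ind; intros H.
  - rewrite app_nil_r in H. exact H.
  - rewrite app_assoc in H. exact (IH (HT _ _ H)).
Qed.

Lemma prefix_length x k : length (prefix x k) = k.
Proof. unfold prefix. now rewrite length_map, length_seq. Qed.

Lemma prefix_add x k j : prefix x (k + j) = prefix x k ++ map x (seq k j).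
Proof. unfold prefix. now rewrite seq_app, map_app. Qed.

Lemma prefix_S x k : prefix x (S k) = prefix x k ++ [x k].
Proof. rewrite <- Nat.add_1_r. apply prefix_add. Qed.

Definition has_children_above (T : list bool -> Prop) (g : nat) : Prop :=
  forall w, T w -> g <= wcode w -> T (w ++ [false]) \/ T (w ++ [true]).

(* Vanishes exactly when [g <= u] and [u] codes a vertex without children. *)
Definition dead_end_above (p : baire) (g u : nat) : nat :=
  (g - u) + (1 - p u) + p (child_code u false) + p (child_code u true).

(* Stage [i] inspects the pair [(u, g)] with [S i = 2 ^ u + g]; every pair with [g <= u]
   occurs. *)
Definition complement_enum (p : baire) (i : nat) : nat :=
  let u := Nat.log2 (S i) in
  let g := S i - 2 ^ u in
  if dead_end_above p g u =? 0 then S g else 0.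

Lemma complement_enum_hits p g :
  (exists i, complement_enum p i = S g) <-> exists u, dead_end_above p g u = 0.
Proof.
  split.
  - intros [i Hi]. unfold complement_enum in Hi.
    destruct (Nat.eqb_spec (dead_end_above p (S i - 2 ^ Nat.log2 (S i)) (Nat.log2 (S i))) 0);
      [|discriminate].
    injection Hi as <-. eauto.
  - intros [u Hu]. assert (Hgu : g <= u) by (unfold dead_end_above in Hu; lia).
    assert (Hu2 : u < 2 ^ u) by (apply Nat.pow_gt_lin_r; lia).
    exists (2 ^ u + g - 1). unfold complement_enum.
    replace (S (2 ^ u + g - 1)) with (2 ^ u + g) by lia.
    rewrite (Nat.log2_unique (2 ^ u + g) u) by (simpl; lia).
    replace (2 ^ u + g - 2 ^ u) with g by lia. now rewrite Hu.
Qed.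

(* Copy the digits of the word coded by [c], then prefer the left child. *)
Definition walk_bit (p : baire) (c u k : nat) : bool :=
  if k <? Nat.log2 (S c) then Nat.testbit (S c) k else p (child_code u false) =? 0.

Fixpoint walk_code (p : baire) (c k : nat) : nat :=
  match k with
  | 0 => 0
  | S k => child_code (walk_code p c k) (walk_bit p c (walk_code p c k) k)
  end.

Definition walk (p : baire) (c k : nat) : bool := walk_bit p c (walk_code p c k) k.

Lemma walk_code_prefix p c k : walk_code p c k = wcode (prefix (walk p c) k).
Proof.
  induction k as [|k IH]; [reflexivity|].
  simpl walk_code. rewrite prefix_S, wcode_snoc, <- IH. reflexivity.
Qed.

Section TreeName.

Variables (T : list bool -> Prop) (p : baire).
Hypothesis T_tree : is_tree T.
Hypothesis p_names_T : forall w, T w <-> p (wcode w) <> 0.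

Lemma child_in_tree w b : T (w ++ [b]) <-> p (child_code (wcode w) b) <> 0.
Proof. now rewrite p_names_T, wcode_snoc. Qed.

Lemma complement_enum_names g :
  has_children_above T g <-> ~ exists i, complement_enum p i = S g.
Proof.
  rewrite complement_enum_hits. split.
  - intros Hch [u Hu]. destruct (wcode_surj u) as [w <-]. unfold dead_end_above in Hu.
    destruct (Hch w) as [C|C]; [apply p_names_T; lia|lia|..]; apply child_in_tree in C; lia.
  - intros Hno w Tw Hgw. apply p_names_T in Tw.
    destruct (Nat.eq_dec (p (child_code (wcode w) false)) 0) as [E0|E0];
      [|left; now apply child_in_tree].
    destruct (Nat.eq_dec (p (child_code (wcode w) true)) 0) as [E1|E1];
      [|right; now apply child_in_tree].
    exfalso. apply Hno. exists (wcode w). unfold dead_end_above. lia.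
Qed.

Lemma has_children_above_unary d :
  (forall w, T w -> d <= length w -> (T (w ++ [true]) <-> ~ T (w ++ [false]))) ->
  has_children_above T (2 ^ d - 1).
Proof.
  intros Hd w Tw Hw.
  assert (Hdw : d <= length w).
  { destruct (wcode_bounds w). apply Nat.lt_succ_r, (Nat.pow_lt_mono_r_iff 2); lia. }
  destruct (Nat.eq_dec (p (child_code (wcode w) false)) 0) as [E|E].
  - right. apply (Hd w Tw Hdw). now rewrite child_in_tree.
  - left. now apply child_in_tree.
Qed.

Lemma walk_is_path g c : has_children_above T g -> g <= c -> p c <> 0 -> is_path T (walk p c).
Proof.
  intros Hch Hgc Hc. set (y := walk p c).
  destruct (wcode_surj c) as [w <-].
  assert (Tw : T w) by now apply p_names_T.
  assert (Hw : prefix y (length w) = w).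
  { apply nth_ext with (d := false) (d' := false); [apply prefix_length|].
    intros i Hi. rewrite prefix_length in Hi. unfold prefix.
    rewrite (nth_indep _ false (y 0)) by (rewrite length_map, length_seq; lia).
    rewrite map_nth, seq_nth by lia. unfold y, walk, walk_bit. rewrite log2_S_wcode, Nat.add_0_l.
    destruct (Nat.ltb_spec i (length w)); [|lia]. now apply testbit_S_wcode. }
  assert (Hlong : forall j,
    T (prefix y (length w + j)) /\ wcode w <= wcode (prefix y (length w + j))).
  { induction j as [|j [Tj Cj]]; [rewrite Nat.add_0_r, Hw; auto|].
    rewrite Nat.add_succ_r, prefix_S, wcode_snoc.
    set (v := prefix y (length w + j)) in *.
    assert (Hy : y (length w + j) = (p (child_code (wcode v) false) =? 0)).
    { unfold y, walk, walk_bit. rewrite log2_S_wcode, walk_code_prefix.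
      destruct (Nat.ltb_spec (length w + j) (length w)); [lia|reflexivity]. }
    split; [|unfold child_code; lia].
    rewrite Hy. destruct (Nat.eqb_spec (p (child_code (wcode v) false)) 0) as [E|E].
    - destruct (Hch v Tj ltac:(lia)) as [C|C]; [apply child_in_tree in C; lia|exact C].
    - now apply child_in_tree. }
  intros k. destruct (Nat.le_gt_cases k (length w)) as [Hk|Hk].
  - apply (tree_prefix_closed T (prefix y k) (map y (seq k (length w - k))) T_tree).
    rewrite <- prefix_add. replace (k + (length w - k)) with (length w) by lia.
    now rewrite Hw.
  - replace k with (length w + (k - length w)) by lia. apply Hlong.
Qed.

End TreeName.

Lemma sharp_tree_vertex_above n T g : 1 <= n -> sharp_tree n T -> exists w, T w /\ g <= wcode w.
Proof.
  intros Hn [Hlev _].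
  assert (Hk : n <= 2 ^ (n + g)).
  { pose proof (Nat.pow_gt_lin_r 2 (n + g)). lia. }
  destruct (Hlev (n + g) Hk) as [[|w l] [_ [Hl Hin]]]; simpl in Hl; [lia|].
  destruct (proj2 (Hin w) (or_introl eq_refl)) as [Lw Tw].
  exists w. split; [exact Tw|].
  destruct (wcode_bounds w). pose proof (Nat.pow_gt_lin_r 2 (length w)). lia.
Qed.

Lemma exists_least_nat (P : nat -> Prop) :
  (forall m, P m \/ ~ P m) -> (exists m, P m) -> exists m, P m /\ forall k, P k -> m <= k.
Proof.
  intros Hdec Hex.
  destruct (dec_inh_nat_subset_has_unique_least_element P Hdec Hex) as [m [[Pm Hm] _]].
  eauto.
Qed.

(** * The reduction programs *)

Definition rchild (tu tb : rterm) : rterm :=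
  radd tu (rmul (rsucc tb) (rpow2 (rlog2 (rsucc tu)))).

Lemma implements_rchild n tu U tb (B : baire -> list nat -> bool) :
  implements n tu U -> implements n tb (fun p a => Nat.b2n (B p a)) ->
  implements n (rchild tu tb) (fun p a => child_code (U p a) (B p a)).
Proof.
  intros HU HB. apply implements_radd; [exact HU|].
  apply implements_rmul; [now apply implements_rsucc|].
  now apply implements_rpow2, implements_rlog2, implements_rsucc.
Qed.

Definition dead_end_above_prog : rterm :=
  radd (radd (radd (rsub (RProj 0) (RProj 1)) (rsub (rconst 1) (roracle (RProj 1))))
             (roracle (rchild (RProj 1) (rconst 0))))
       (roracle (rchild (RProj 1) (rconst 1))).

Lemma implements_dead_end_above :
  implements 2 dead_end_above_prog (fun p a => dead_end_above p (nth 0 a 0) (nth 1 a 0)).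
Proof.
  assert (U : implements 2 (RProj 1) (fun _ a => nth 1 a 0)) by (apply implements_proj; lia).
  repeat apply implements_radd.
  - apply implements_rsub; [apply implements_proj; lia|exact U].
  - apply implements_rsub; [apply implements_rconst|now apply implements_roracle].
  - apply implements_roracle, (implements_rchild _ _ _ _ (fun _ _ => false)); [exact U|].
    apply implements_rconst.
  - apply implements_roracle, (implements_rchild _ _ _ _ (fun _ _ => true)); [exact U|].
    apply implements_rconst.
Qed.

Definition complement_enum_prog : rterm :=
  let g := rsub (rsucc (RProj 0)) (rpow2 (RProj 1)) in
  RComp (rifz (RComp dead_end_above_prog [g; RProj 1]) (rsucc g) (rconst 0))
        [RProj 0; rlog2 (rsucc (RProj 0))].

Lemma implements_complement_enum :
  implements 1 complement_enum_prog (fun p a => complement_enum p (nth 0 a 0)).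
Proof.
  assert (G : implements 2 (rsub (rsucc (RProj 0)) (rpow2 (RProj 1)))
                (fun _ a => S (nth 0 a 0) - 2 ^ nth 1 a 0)).
  { apply implements_rsub; [apply implements_rsucc|apply implements_rpow2];
      apply implements_proj; lia. }
  apply (implements_comp2 _ _ (fun p a =>
    let g := S (nth 0 a 0) - 2 ^ nth 1 a 0 in
    if dead_end_above p g (nth 1 a 0) =? 0 then S g else 0)).
  - apply implements_rifz; [|now apply implements_rsucc|apply implements_rconst].
    apply (implements_comp2 _ _ _ _ _ _ _ implements_dead_end_above G).
    apply implements_proj. lia.
  - apply implements_proj. lia.
  - apply implements_rlog2, implements_rsucc, implements_proj. lia.
Qed.

(* The output program sees the tree name [p] only through the even positions of
   [bpair p (G h)]. *)
Definition evens (q : baire) : baire := fun x => q (x + x).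

Lemma evens_bpair p y x : evens (bpair p y) x = p x.
Proof.
  unfold evens, bpair. replace (x + x) with (2 * x) by lia.
  now rewrite Nat.even_even, Nat.div2_double.
Qed.

Definition revens (t : rterm) : rterm := roracle (radd t t).

Lemma implements_revens n t F : implements n t F ->
  implements n (revens t) (fun q a => evens q (F q a)).
Proof. intros H. now apply implements_roracle, implements_radd. Qed.

Definition walk_bit_prog : rterm :=
  rifz (rsub (rsucc (RProj 0)) (rlog2 (rsucc (RProj 2))))
       (rtestbit (rsucc (RProj 2)) (RProj 0))
       (rsub (rconst 1) (revens (rchild (RProj 1) (rconst 0)))).

Lemma implements_walk_bit : implements 3 walk_bit_prog
  (fun q a => Nat.b2n (walk_bit (evens q) (nth 2 a 0) (nth 1 a 0) (nth 0 a 0))).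
Proof.
  assert (P : forall i, i < 3 -> implements 3 (RProj i) (fun _ a => nth i a 0))
    by (intros; now apply implements_proj).
  apply implements_ext with (F := fun q a =>
    if S (nth 0 a 0) - Nat.log2 (S (nth 2 a 0)) =? 0
    then Nat.b2n (Nat.testbit (S (nth 2 a 0)) (nth 0 a 0))
    else 1 - evens q (child_code (nth 1 a 0) false)).
  - apply implements_rifz.
    + apply implements_rsub; [apply implements_rsucc, P; lia|].
      apply implements_rlog2, implements_rsucc, P. lia.
    + apply implements_rtestbit; [apply implements_rsucc|]; apply P; lia.
    + apply implements_rsub; [apply implements_rconst|].
      apply implements_revens, (implements_rchild _ _ _ _ (fun _ _ => false)); [apply P; lia|].
      apply implements_rconst.
  - intros q a _. unfold walk_bit.
    set (k := nth 0 a 0). set (L := Nat.log2 (S (nth 2 a 0))).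
    destruct (Nat.ltb_spec k L).
    + now replace (S k - L) with 0 by lia.
    + replace (S k - L) with (S (k - L)) by lia. simpl.
      now destruct (evens q (child_code (nth 1 a 0) false)).
Qed.

Definition walk_code_prog : rterm := RPrim (rconst 0) (rchild (RProj 1) walk_bit_prog).

Definition walk_prog : rterm := RComp walk_bit_prog [RProj 0; walk_code_prog; RProj 1].

Lemma implements_walk :
  implements 2 walk_prog (fun q a => Nat.b2n (walk (evens q) (nth 1 a 0) (nth 0 a 0))).
Proof.
  apply (implements_comp3 _ _ _ _ _ _ _ _ _ implements_walk_bit);
    [apply implements_proj; lia| |apply implements_proj; lia].
  apply implements_prim with (F := fun _ _ => 0)
    (G := fun q a =>
      child_code (nth 1 a 0) (walk_bit (evens q) (nth 2 a 0) (nth 1 a 0) (nth 0 a 0))).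
  - apply implements_rconst.
  - apply implements_rchild; [apply implements_proj; lia|apply implements_walk_bit].
  - reflexivity.
  - reflexivity.
Qed.

(* Position 1 of [bpair p (G h)] holds the answer [g] of [C_N]. *)
Definition least_vertex_prog : rterm :=
  RMu (radd (rsub (roracle (rconst 1)) (RProj 0)) (rsub (rconst 1) (revens (RProj 0)))).

Definition path_prog : rterm := RComp walk_prog [RProj 0; least_vertex_prog].

Lemma computes_path_prog q c : q 1 <= c -> evens q c <> 0 ->
  (forall m, q 1 <= m -> evens q m <> 0 -> c <= m) ->
  computes path_prog q (fun k => Nat.b2n (walk (evens q) c k)).
Proof.
  intros Hgc Hc Hmin k. apply e_comp with (vs := [k; c]).
  - apply el_cons; [now constructor|]. apply el_cons; [|constructor].
    apply eval_mu with (n := 1) (F := fun q a => (q 1 - nth 0 a 0) + (1 - evens q (nth 0 a 0))).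
    + apply implements_radd.
      * apply implements_rsub; [apply implements_roracle, implements_rconst|].
        apply implements_proj. lia.
      * apply implements_rsub; [apply implements_rconst|].
        apply implements_revens, implements_proj. lia.
    + simpl. lia.
    + cbn [nth]. lia.
    + intros m Hm. cbn [nth]. destruct (Nat.le_gt_cases (q 1) m); [|lia].
      destruct (Nat.eq_dec (evens q m) 0) as [E|E]; [lia|].
      specialize (Hmin m ltac:(lia) E). lia.
  - apply implements_walk. simpl. lia.
Qed.

Theorem proposition23 : forall n : nat, 1 <= n -> Wle (C_sharp n) C_N.
Proof.
  intros n Hn. exists complement_enum_prog, path_prog.
  intros G HG p T [T_tree p_names_T] [x [Hsharp _]].
  set (h := complement_enum p).
  assert (Hh : delta closedN_rep h (has_children_above T)).
  { intros g. exact (complement_enum_names T p p_names_T g). }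
  destruct (HG h _ Hh) as [HGh [g [Hg0 Hg]]].
  { destruct Hsharp as [_ [d Hd]].
    exists (2 ^ d - 1). exact (has_children_above_unary T p p_names_T d Hd). }
  exists h. split; [intros k; exact (implements_complement_enum p [k] (le_n 1))|].
  split; [exact HGh|].
  set (q := bpair p (pval G h)).
  assert (q_names_T : forall w, T w <-> evens q (wcode w) <> 0).
  { intros w. unfold q. now rewrite evens_bpair. }
  destruct (exists_least_nat (fun c => g <= c /\ evens q c <> 0)) as [c [[Hgc Hc] Hmin]].
  { intros c. destruct (le_dec g c), (Nat.eq_dec (evens q c) 0); [right|left|right|right]; lia. }
  { destruct (sharp_tree_vertex_above n T g Hn Hsharp) as [w [Tw Hw]].
    exists (wcode w). split; [exact Hw|now apply q_names_T]. }
  exists (fun k => Nat.b2n (walk (evens q) c k)). split.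
  { assert (Hq1 : q 1 = g) by exact Hg0.
    apply computes_path_prog; rewrite ?Hq1; [exact Hgc|exact Hc|].
    intros m Hm Hqm. now apply Hmin. }
  exists (walk (evens q) c). split; [intros i; reflexivity|].
  split; [exact Hsharp|].
  exact (walk_is_path T (evens q) T_tree q_names_T g c Hg Hgc Hc).
Qed.
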